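(* Let $k\ge1$. Let $(G_1,\dots,G_k)$ be distributed according to $\gamma_k$, $U$ uniform on $\{0,1,\dots,k\}$, and $\tau$ a uniform random permutation of $\{0,1,\dots,k\}$, all independent. Let $(I_1,\dots,I_{k+1})\sim\mu_{k+1}$ and $U'$ uniform on $\{1,\dots,k+1\}$ independent of it, and set $J=(I_i-I_{U'})_{1\le i\le k+1}$. Then $(\bar G_{\tau(i)}-\bar G_U)_{0\le i\le k}\overset{(d)}{=}J$, where $\bar G_0=0$ and $\bar G_i=G_1+\dots+G_i$.
   Context: Let $B_1,B_2,\dots$ be i.i.d. two-sided standard Brownian motions and $I^{(n)}=B_n\circ\cdots\circ B_1$. It is known that for any $m\ge1$ and distinct nonzero reals $t_1,\dots,t_m$, $(I^{(n)}(t_1),\dots,I^{(n)}(t_m))$ converges in distribution to a law $\mu_m$ independent of the $t_i$'s (hence exchangeable), and that for $(I_1,\dots,I_m)\sim\mu_m$, $(I_2-I_1,\dots,I_m-I_1)\sim\mu_{m-1}$. For a sequence $\ell_0,\dots,\ell_k$ with increasing rearrangement $\hat\ell_0\le\dots\le\hat\ell_k$, its gaps sequence is $(\hat\ell_i-\hat\ell_{i-1})_{1\le i\le k}$. $\gamma_k$ is the law of the gaps sequence of a $\mu_{k+1}$-distributed vector. *)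

From HB Require Import structures.
From mathcomp Require Import all_boot all_order all_algebra.
From mathcomp Require Import all_classical all_reals all_analysis.
Set Implicit Arguments.
Unset Strict Implicit.
Unset Printing Implicit Defensive.
Import Order.TTheory GRing.Theory Num.Theory.
Import numFieldNormedType.Exports.
Local Open Scope classical_set_scope.
Local Open Scope ring_scope.

Definition Exp {d} {T : measurableType d} {R : realType} (P : probability T R)
  (X : T -> R) : R := \int[P]_w X w.

Definition bcont {R : realType} {m : nat} (f : 'rV[R]_m -> R) : Prop :=
  continuous f /\ exists M : R, forall x, `|f x| <= M.
Definition bcont1 {R : realType} (f : R -> R) : Prop :=
  continuous f /\ exists M : R, forall x, `|f x| <= M.

Definition rvec {d} {T : measurableType d} {R : realType} {m : nat}
  (X : T -> 'rV[R]_m) : Prop :=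
  forall i : 'I_m, measurable_fun setT (fun w => X w ord0 i).

Definition rfin {d} {T : measurableType d} {A : finType} (X : T -> A) : Prop :=
  forall a : A, measurable [set w | X w = a].

(* B : nat -> R -> T -> R is a sequence (B 0 = B_1, B 1 = B_2, ...) of
   i.i.d. two-sided standard Brownian motions on (T, P):
   - measurable, B_n(0) = 0, continuous paths;
   - for t_0 < t_1 < ... < t_j the increments B(t_{i+1}) - B(t_i) are
     independent with laws N(0, t_{i+1} - t_i) (test-function form);
   - the processes B_0, B_1, ... are mutually independent (finite-dimensional,
     test-function form). *)
Definition iid_two_sided_BM {d} {T : measurableType d} {R : realType}
  (P : probability T R) (B : nat -> R -> T -> R) : Prop :=
  [/\ (forall n t, measurable_fun setT (B n t)),
      (forall n w, B n 0 w = 0),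
      (forall n w, continuous (fun t => B n t w)),
      (forall n j (t : 'I_j.+1 -> R),
          (forall i : 'I_j, t (widen_ord (leqnSn j) i) < t (lift ord0 i)) ->
          forall g : 'I_j -> R -> R, (forall i, bcont1 (g i)) ->
          Exp P (fun w => \prod_(i < j)
              g i (B n (t (lift ord0 i)) w - B n (t (widen_ord (leqnSn j) i)) w))
          = \prod_(i < j) \int[normal_prob 0
                 (Num.sqrt (t (lift ord0 i) - t (widen_ord (leqnSn j) i)))]_x g i x)
    & (forall (N j : nat) (t : 'I_j -> R) (g : 'I_N -> 'rV[R]_j -> R),
          (forall n, bcont (g n)) ->
          Exp P (fun w => \prod_(n < N) g n (\row_i B n (t i) w))
          = \prod_(n < N) Exp P (fun w => g n (\row_i B n (t i) w)))].

Fixpoint iterB {T : Type} {R : realType} (B : nat -> R -> T -> R) (n : nat)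
  (t : R) (w : T) : R :=
  match n with
  | 0 => t
  | n'.+1 => B n' (iterB B n' t w) w
  end.

(* The random vector I on (T2,P2) has law mu_m: for all distinct nonzero
   t_1..t_m, (I^(n)(t_1),...,I^(n)(t_m)) converges in distribution to I. *)
Definition has_law_mu {d0 d2} {T0 : measurableType d0} {T2 : measurableType d2}
  {R : realType} {m : nat} (P0 : probability T0 R) (B : nat -> R -> T0 -> R)
  (P2 : probability T2 R) (I : T2 -> 'rV[R]_m) : Prop :=
  forall t : 'rV[R]_m,
    injective (fun i : 'I_m => t ord0 i) -> (forall i, t ord0 i != 0) ->
    forall f : 'rV[R]_m -> R, bcont f ->
      (fun n : nat => Exp P0 (fun w => f (\row_i iterB B n (t ord0 i) w)))
        @ \oo --> Exp P2 (fun w => f (I w)).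

Definition gaps {R : realType} {m : nat} (l : 'rV[R]_m.+1) : 'rV[R]_m :=
  let s := sort <=%R [seq l ord0 i | i <- enum 'I_m.+1] in
  \row_(i < m) (nth 0 s i.+1 - nth 0 s i).

(* partial sums: Gbar g i = g_1 + ... + g_i  (Gbar g 0 = 0), g indexed from 0 *)
Definition Gbar {R : realType} {k : nat} (g : 'rV[R]_k) (i : 'I_k.+1) : R :=
  \sum_(j < k | (j < i)%N) g ord0 j.

From HB Require Import structures.
From mathcomp Require Import all_boot all_order all_algebra.
From mathcomp Require Import all_classical all_reals all_analysis.
From mathcomp Require Import perm measurable_realfun ring.
Set Implicit Arguments.
Unset Strict Implicit.
Unset Printing Implicit Defensive.
Import Order.TTheory GRing.Theory Num.Theory.
Import numFieldNormedType.Exports.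
Local Open Scope classical_set_scope.
Local Open Scope ring_scope.

(* Conditionally on U = u and tau = s, and since G has the law of the gaps of
   I, the left-hand side averages f((Gbar_{s i} - Gbar_u)_i) over (u, s) with
   G = gaps I.  If r0 sorts the coordinates of x then Gbar (gaps x) j =
   x_{r0 j} - x_{r0 0}, so this double sum over (u, s) is the sum over all
   permutations r and indices v of f((x_{r i} - x_{r v})_i).  The law mu_{k+1}
   is exchangeable, because it is the limit law of the iterated Brownian motion
   at any distinct nonzero times, permuted or not; hence averaging over r does
   not change the law, and what remains is the law of (I_i - I_{U'})_i. *)


Section BoundedContinuous.
Variable R : realType.

Lemma continuous_row m p (L : 'rV[R]_m -> 'rV[R]_p) :
  (forall j, continuous (fun x => L x ord0 j)) -> continuous L.
Proof.
move=> cL x A [Q HQ QA].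
have near_Q : \forall y \near x, forall j, Q ord0 j (L y ord0 j).
  apply: (@filter_forall _ _ (fun j y => Q ord0 j (L y ord0 j)) (nbhs x) _) => j.
  exact: cL _ _ (HQ ord0 j).
apply: (filterS _ near_Q) => y Qy; apply: QA => i j.
by rewrite (ord1 i); exact: Qy.
Qed.

Lemma bcont_comp m p (f : 'rV[R]_p -> R) (L : 'rV[R]_m -> 'rV[R]_p) :
  bcont f -> (forall j, continuous (fun x => L x ord0 j)) -> bcont (f \o L).
Proof.
move=> [cf [M fM]] cL; split; last by exists M => x; exact: fM.
by move=> x; apply: continuous_comp; [exact: continuous_row | exact: cf].
Qed.

Lemma continuous_sum m (I : Type) (s : seq I) (F : I -> 'rV[R]_m -> R) :
  (forall i, continuous (F i)) -> continuous (fun x => \sum_(i <- s) F i x).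
Proof.
move=> cF; elim: s => [|i s IH].
  by under eq_fun do rewrite big_nil; exact: cst_continuous.
by under eq_fun do rewrite big_cons; move=> x; apply: continuousD; [exact: cF|exact: IH].
Qed.

Lemma bcont_sum m (I : Type) (s : seq I) (F : I -> 'rV[R]_m -> R) :
  (forall i, bcont (F i)) -> bcont (fun x => \sum_(i <- s) F i x).
Proof.
move=> bF; split; first by apply: continuous_sum => i; case: (bF i).
have [M FM] := choice (fun i => (bF i).2).
exists (\sum_(i <- s) M i) => x.
by apply: le_trans (ler_norm_sum _ _ _) _; apply: ler_sum => i _; exact: FM.
Qed.

Lemma bcont_row_sub m n (f : 'rV[R]_m -> R) (phi : 'I_m -> 'rV[R]_n -> R)
    (psi : 'rV[R]_n -> R) :
  bcont f -> (forall i, continuous (phi i)) -> continuous psi ->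
  bcont (fun x => f (\row_i (phi i x - psi x))).
Proof.
move=> bf cphi cpsi; apply: (@bcont_comp n m f (fun x => \row_i (phi i x - psi x))) => // j.
by under eq_fun do rewrite mxE; move=> x; apply: continuousB; [exact: cphi|exact: cpsi].
Qed.

Lemma bcont_row_perm m (h : 'rV[R]_m -> R) (r : {perm 'I_m}) :
  bcont h -> bcont (fun x => h (\row_i x ord0 (r i))).
Proof.
move=> bh; apply: (@bcont_comp m m h (fun x => \row_i x ord0 (r i))) => // j.
by under eq_fun do rewrite mxE; exact: coord_continuous.
Qed.

Lemma continuous_Gbar k (j : 'I_k.+1) : continuous (fun g : 'rV[R]_k => Gbar g j).
Proof.
have -> : (fun g : 'rV[R]_k => Gbar g j) =
    (fun g => \sum_(l <- index_enum 'I_k) (if (l < j)%N then g ord0 l else 0)).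
  by apply/funext => g; rewrite /Gbar big_mkcond.
by apply: continuous_sum => l; case: (l < j)%N; [exact: coord_continuous|exact: cst_continuous].
Qed.

End BoundedContinuous.

Section Measurability.
Variables (R : realType) (d : measure_display) (T : measurableType d).

Definition rat_box m (q : 'rV[rat]_m * 'rV[rat]_m) : set 'rV[R]_m :=
  [set y | forall i, ratr (q.1 ord0 i) < y ord0 i < ratr (q.2 ord0 i)].

Lemma open_rat_box_cover m (O : set 'rV[R]_m) (y : 'rV[R]_m) :
  open O -> O y -> exists q, rat_box q y /\ rat_box q `<=` O.
Proof.
move=> oO Oy; have [Q HQ QO] := oO _ Oy.
have coord_box j : exists q : rat * rat, ratr q.1 < y ord0 j < ratr q.2 /\
    (forall z, ratr q.1 < z < ratr q.2 -> Q ord0 j z).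
  have /nbhs_ballP [e e0] := HQ ord0 j; rewrite ball_itv => eQ.
  have [q1] : exists q1 : rat, ratr q1 \in `]y ord0 j - e, y ord0 j[.
    by apply: rat_in_itvoo; rewrite ltrBlDr ltrDl.
  have [q2] : exists q2 : rat, ratr q2 \in `]y ord0 j, y ord0 j + e[.
    by apply: rat_in_itvoo; rewrite ltrDl.
  rewrite !in_itv /= => /andP[yq2 q2e] /andP[eq1 q1y].
  exists (q1, q2); split => [|z /andP[q1z zq2]]; first by rewrite q1y yq2.
  by apply: eQ; rewrite /= in_itv /= (lt_trans eq1 q1z) (lt_trans zq2 q2e).
have [q qP] := choice coord_box.
exists (\row_j (q j).1, \row_j (q j).2); split => [j|z zq]; first by rewrite !mxE; exact: (qP j).1.
apply: QO => i j; rewrite (ord1 i); apply: (qP j).2.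
by have := zq j; rewrite !mxE.
Qed.

Lemma measurable_rat_box_preimage m (X : T -> 'rV[R]_m) q :
  rvec X -> measurable (X @^-1` rat_box q).
Proof.
move=> mX.
have -> : X @^-1` rat_box q = \bigcap_(i in [set: 'I_m])
    [set w | X w ord0 i \in `](ratr (q.1 ord0 i)), (ratr (q.2 ord0 i))[].
  apply/seteqP; split => w Xw i; first by move=> _ /=; rewrite in_itv; exact: Xw.
  by have := Xw i I; rewrite /= in_itv.
apply: fin_bigcap_measurable; first exact: finite_finset.
move=> i _; have := mX i measurableT _ (measurable_itv `](ratr (q.1 ord0 i)), (ratr (q.2 ord0 i))[).
by rewrite setTI.
Qed.

Lemma measurable_continuous_comp m (X : T -> 'rV[R]_m) (h : 'rV[R]_m -> R) :
  rvec X -> continuous h -> measurable_fun setT (h \o X).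
Proof.
move=> mX ch; apply: (measurability _ (RGenOpens.measurableE R)).
move=> _ [_ [a [b ->]] <-].
set O := h @^-1` `]a, b[%classic.
have oO : open O by move/continuousP : ch; apply; exact: itv_open.
pose F q := [set w | rat_box q `<=` O /\ rat_box q (X w)].
have -> : setT `&` (h \o X) @^-1` `]a, b[%classic = \bigcup_q F q.
  apply/seteqP; split => w /=; last by move=> [q _ [qO qX]]; split => //; exact: qO.
  by move=> [_ /(open_rat_box_cover oO)[q [qX qO]]]; exists q.
apply: countable_bigcupT_measurable => [|q]; first exact: countableP.
have [qO|nqO] := pselect (rat_box q `<=` O).
  have -> : F q = X @^-1` rat_box q by apply/seteqP; split => w /= => [[]|].
  exact: measurable_rat_box_preimage.
by have -> : F q = set0 by apply/seteqP; split => w // [].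
Qed.

End Measurability.

Section Expectation.
Variables (R : realType) (d : measure_display) (T : measurableType d).
Variable P : probability T R.

Definition bounded_measurable (F : T -> R) :=
  measurable_fun setT F /\ exists M, forall w, `|F w| <= M.

Lemma bounded_measurable_integrable F :
  bounded_measurable F -> P.-integrable setT (EFin \o F).
Proof.
move=> [mF [M FM]]; apply: measurable_bounded_integrable => //.
  by apply: (le_lt_trans (probability_le1 P measurableT)); rewrite ltry.
rewrite /bounded_near; near=> M' => x _ /=; apply: le_trans (FM x) _.
by near: M'; apply: nbhs_pinfty_ge; exact: num_real.
Unshelve. all: by end_near.
Qed.

Lemma bounded_measurableD F1 F2 : bounded_measurable F1 -> bounded_measurable F2 ->
  bounded_measurable (fun w => F1 w + F2 w).
Proof.
move=> [m1 [M1 FM1]] [m2 [M2 FM2]]; split; first exact: measurable_funD.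
by exists (M1 + M2) => w; apply: le_trans (ler_normD _ _) _; apply: lerD.
Qed.

Lemma bounded_measurableM F1 F2 : bounded_measurable F1 -> bounded_measurable F2 ->
  bounded_measurable (fun w => F1 w * F2 w).
Proof.
move=> [m1 [M1 FM1]] [m2 [M2 FM2]]; split; first exact: measurable_funM.
exists (`|M1| * `|M2|) => w; rewrite normrM.
by apply: ler_pM => //; apply: le_trans (ler_norm _); [exact: FM1|exact: FM2].
Qed.

Lemma bounded_measurable_sum (I : Type) (s : seq I) (F : I -> T -> R) :
  (forall i, bounded_measurable (F i)) ->
  bounded_measurable (fun w => \sum_(i <- s) F i w).
Proof.
move=> bF; elim: s => [|i s IH].
  by under eq_fun do rewrite big_nil; split; [exact: measurable_cst|exists 0 => w; rewrite normr0].
by under eq_fun do rewrite big_cons; exact: bounded_measurableD.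
Qed.

Lemma bounded_measurable_continuous_comp m (X : T -> 'rV[R]_m) (h : 'rV[R]_m -> R) :
  rvec X -> bcont h -> bounded_measurable (h \o X).
Proof.
move=> mX [ch [M hM]]; split; last by exists M => w; exact: hM.
exact: measurable_continuous_comp.
Qed.

Lemma indicator_eqE (A : finType) (X : T -> A) (a : A) :
  (fun w => (X w == a)%:R : R) = \1_[set w | X w = a].
Proof.
by apply/funext => w; rewrite indicE; case: eqP => Xa; [rewrite mem_set|rewrite memNset].
Qed.

Lemma bounded_measurable_indicator (A : finType) (X : T -> A) (a : A) :
  rfin X -> bounded_measurable (fun w => (X w == a)%:R).
Proof.
move=> mX; rewrite indicator_eqE; split; first exact: measurable_indic.
by exists 1 => w; rewrite indicE; case: (_ \in _); rewrite ?normr1 ?normr0.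
Qed.

Lemma Exp_sum (I : Type) (s : seq I) (F : I -> T -> R) :
  (forall i, bounded_measurable (F i)) ->
  Exp P (fun w => \sum_(i <- s) F i w) = \sum_(i <- s) Exp P (F i).
Proof.
move=> bF; elim: s => [|i s IH].
  by under eq_fun do rewrite big_nil; rewrite big_nil /Exp Rintegral_cst // mul0r.
under eq_fun do rewrite big_cons.
rewrite big_cons /Exp RintegralD -?IH //; apply: bounded_measurable_integrable => //.
exact: bounded_measurable_sum.
Qed.

Lemma Exp_indicator (A : finType) (X : T -> A) (a : A) :
  rfin X -> Exp P (fun w => (X w == a)%:R) = fine (P [set w | X w = a]).
Proof. by move=> mX; rewrite indicator_eqE /Exp /Rintegral integral_indic ?setIT. Qed.

End Expectation.

Lemma sum_mul_indicator (R : ringType) (I : finType) (F : I -> R) (a : I) :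
  \sum_i F i * (a == i)%:R = F a.
Proof.
by under eq_bigr do rewrite mulr_natr mulrb eq_sym; rewrite -big_mkcond big_pred1_eq.
Qed.

Section Independence.
Variables (R : realType) (d : measure_display) (T : measurableType d).
Variables (P : probability T R) (m : nat) (X : T -> 'rV[R]_m).
Hypothesis mX : rvec X.

Lemma Exp_indep_discrete (A : finType) (V : T -> A) (F : A -> 'rV[R]_m -> R) :
  rfin V -> (forall a, bcont (F a)) ->
  (forall (f : 'rV[R]_m -> R) (g : A -> R), bcont f ->
     Exp P (fun w => f (X w) * g (V w))
     = Exp P (fun w => f (X w)) * Exp P (fun w => g (V w))) ->
  Exp P (fun w => F (V w) (X w))
  = \sum_a Exp P (fun w => F a (X w)) * fine (P [set w | V w = a]).
Proof.
move=> mV bF indep.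
transitivity (Exp P (fun w => \sum_a F a (X w) * (V w == a)%:R)).
  by congr Exp; apply/funext => w; rewrite sum_mul_indicator.
rewrite Exp_sum => [|a]; last first.
  apply: bounded_measurableM; last exact: bounded_measurable_indicator.
  exact: bounded_measurable_continuous_comp.
by apply: eq_bigr => a _; rewrite (indep _ (fun b => (b == a)%:R)) // Exp_indicator.
Qed.

Lemma Exp_indep_discrete2 (A B : finType) (U : T -> A) (V : T -> B)
    (F : A -> B -> 'rV[R]_m -> R) :
  rfin U -> rfin V -> (forall a b, bcont (F a b)) ->
  (forall (f : 'rV[R]_m -> R) (g : A -> R) (h : B -> R), bcont f ->
     Exp P (fun w => f (X w) * g (U w) * h (V w))
     = Exp P (fun w => f (X w)) * Exp P (fun w => g (U w))
       * Exp P (fun w => h (V w))) ->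
  Exp P (fun w => F (U w) (V w) (X w))
  = \sum_a \sum_b Exp P (fun w => F a b (X w))
      * fine (P [set w | U w = a]) * fine (P [set w | V w = b]).
Proof.
move=> mU mV bF indep.
have bFUV a b : bounded_measurable (fun w => F a b (X w) * (U w == a)%:R * (V w == b)%:R).
  apply: bounded_measurableM; last exact: bounded_measurable_indicator.
  apply: bounded_measurableM; last exact: bounded_measurable_indicator.
  exact: bounded_measurable_continuous_comp.
transitivity (Exp P (fun w => \sum_a \sum_b
    F a b (X w) * (U w == a)%:R * (V w == b)%:R)).
  congr Exp; apply/funext => w.
  rewrite -(sum_mul_indicator (fun a => F a (V w) (X w)) (U w)); apply: eq_bigr => a _.
  rewrite -(sum_mul_indicator (fun b => F a b (X w)) (V w)) mulr_suml.
  by apply: eq_bigr => b _; rewrite mulrAC.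
rewrite Exp_sum => [|a]; last exact: bounded_measurable_sum.
apply: eq_bigr => a _; rewrite Exp_sum //; apply: eq_bigr => b _.
by rewrite (indep _ (fun a' => (a' == a)%:R) (fun b' => (b' == b)%:R)) // !Exp_indicator.
Qed.

Lemma Exp_indep_uniform (A : finType) (V : T -> A) (F : A -> 'rV[R]_m -> R) (p : R) :
  rfin V -> (forall a, bcont (F a)) ->
  (forall (f : 'rV[R]_m -> R) (g : A -> R), bcont f ->
     Exp P (fun w => f (X w) * g (V w))
     = Exp P (fun w => f (X w)) * Exp P (fun w => g (V w))) ->
  (forall a, P [set w | V w = a] = p%:E) ->
  Exp P (fun w => F (V w) (X w)) = p * Exp P (fun w => \sum_a F a (X w)).
Proof.
move=> mV bF indep lawV; rewrite (Exp_indep_discrete mV bF indep) Exp_sum => [|a].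
  by rewrite mulr_sumr; apply: eq_bigr => a _; rewrite lawV mulrC.
exact: bounded_measurable_continuous_comp.
Qed.

Lemma Exp_indep_uniform2 (A B : finType) (U : T -> A) (V : T -> B)
    (F : A -> B -> 'rV[R]_m -> R) (p q : R) :
  rfin U -> rfin V -> (forall a b, bcont (F a b)) ->
  (forall (f : 'rV[R]_m -> R) (g : A -> R) (h : B -> R), bcont f ->
     Exp P (fun w => f (X w) * g (U w) * h (V w))
     = Exp P (fun w => f (X w)) * Exp P (fun w => g (U w))
       * Exp P (fun w => h (V w))) ->
  (forall a, P [set w | U w = a] = p%:E) -> (forall b, P [set w | V w = b] = q%:E) ->
  Exp P (fun w => F (U w) (V w) (X w))
  = p * q * Exp P (fun w => \sum_a \sum_b F a b (X w)).
Proof.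
move=> mU mV bF indep lawU lawV; rewrite (Exp_indep_discrete2 mU mV bF indep).
rewrite Exp_sum => [|a]; last first.
  by apply: bounded_measurable_sum => b; exact: bounded_measurable_continuous_comp.
rewrite mulr_sumr; apply: eq_bigr => a _.
rewrite Exp_sum => [|b]; last exact: bounded_measurable_continuous_comp.
by rewrite mulr_sumr; apply: eq_bigr => b _; rewrite lawU lawV /=; ring.
Qed.

End Independence.

Section Gaps.
Variables (R : realType) (k : nat).

Lemma sort_perm_exists (x : 'rV[R]_k.+1) :
  exists r : {perm 'I_k.+1}, sort <=%R [seq x ord0 i | i <- enum 'I_k.+1]
    = [seq x ord0 (r i) | i <- enum 'I_k.+1].
Proof.
have /tuple_permP[r sortE] : perm_eq (sort <=%R [seq x ord0 i | i <- enum 'I_k.+1])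
    [tuple x ord0 i | i < k.+1].
  by rewrite perm_sort /= enumT.
by exists r; rewrite sortE; apply: eq_map => i; exact: tnth_mktuple.
Qed.

Lemma gaps_sort_perm (x : 'rV[R]_k.+1) (r : {perm 'I_k.+1}) :
  sort <=%R [seq x ord0 i | i <- enum 'I_k.+1] = [seq x ord0 (r i) | i <- enum 'I_k.+1] ->
  gaps x = \row_(i < k) (nth 0 [seq x ord0 (r i) | i <- enum 'I_k.+1] i.+1
                         - nth 0 [seq x ord0 (r i) | i <- enum 'I_k.+1] i).
Proof. by move=> sortE; rewrite /gaps sortE. Qed.

Lemma Gbar_gaps (x : 'rV[R]_k.+1) (r : {perm 'I_k.+1}) (j : 'I_k.+1) :
  sort <=%R [seq x ord0 i | i <- enum 'I_k.+1] = [seq x ord0 (r i) | i <- enum 'I_k.+1] ->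
  Gbar (gaps x) j = x ord0 (r j) - x ord0 (r ord0).
Proof.
move=> /gaps_sort_perm ->; rewrite /Gbar.
under eq_bigr do rewrite mxE.
set S := nth 0 _.
have SE (i : 'I_k.+1) : S i = x ord0 (r i).
  rewrite /S (nth_map ord0) ?size_enum_ord //.
  by congr (x _ (r _)); apply: val_inj; exact: nth_enum_ord.
rewrite -(SE j) -(SE ord0) -(big_ord_widen k (fun l => S l.+1 - S l)); last exact: ltn_ord j.
by rewrite -(big_mkord xpredT (fun l => S l.+1 - S l)) telescope_sumr.
Qed.

Lemma sum_gaps_shifts (F : 'rV[R]_k.+1 -> R) (x : 'rV[R]_k.+1) :
  \sum_(u : 'I_k.+1) \sum_(s : {perm 'I_k.+1})
      F (\row_i (Gbar (gaps x) (s i) - Gbar (gaps x) u))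
  = \sum_(r : {perm 'I_k.+1}) \sum_(v : 'I_k.+1)
      F (\row_i (x ord0 (r i) - x ord0 (r v))).
Proof.
have [r0 sortE] := sort_perm_exists x.
have gapsE u s : \row_i (Gbar (gaps x) (s i) - Gbar (gaps x) u)
    = \row_i (x ord0 (r0 (s i)) - x ord0 (r0 u)) :> 'rV[R]_k.+1.
  by apply/rowP => i; rewrite !mxE !(Gbar_gaps _ sortE) opprB addrA subrK.
under eq_bigr do under eq_bigr do rewrite gapsE.
(* Reindex by [r := s * r0], then by [u := s v]. *)
rewrite exchange_big [RHS](reindex_inj (mulIg r0)) /=.
apply: eq_bigr => s _; rewrite (reindex_inj (@perm_inj _ s)) /=.
by apply: eq_bigr => v _; congr F; apply/rowP => i; rewrite !mxE !permM.
Qed.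

End Gaps.

Lemma Exp_row_perm (R : realType) (d0 d2 : measure_display)
    (T0 : measurableType d0) (T2 : measurableType d2) (P0 : probability T0 R)
    (B : nat -> R -> T0 -> R) (P2 : probability T2 R) m (I : T2 -> 'rV[R]_m)
    (h : 'rV[R]_m -> R) (r : {perm 'I_m}) :
  has_law_mu P0 B P2 I -> bcont h ->
  Exp P2 (fun w => h (I w)) = Exp P2 (fun w => h (\row_i I w ord0 (r i))).
Proof.
move=> lawI bh.
pose t : 'rV[R]_m := \row_i (i.+1)%:R.
pose tr : 'rV[R]_m := \row_i t ord0 (r i).
have t_inj : injective (fun i => t ord0 i).
  by move=> i j /eqP; rewrite !mxE eqr_nat eqSS => /eqP/val_inj.
have t_neq0 i : t ord0 i != 0 by rewrite mxE pnatr_eq0.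
have tr_inj : injective (fun i => tr ord0 i).
  by move=> i j /eqP; rewrite !mxE eqr_nat eqSS => /eqP/val_inj/perm_inj.
have tr_neq0 i : tr ord0 i != 0 by rewrite !mxE pnatr_eq0.
have := lawI _ tr_inj tr_neq0 _ bh.
have -> : (fun n => Exp P0 (fun w => h (\row_i iterB B n (tr ord0 i) w)))
    = (fun n => Exp P0 (fun w => h (\row_i (\row_j iterB B n (t ord0 j) w) ord0 (r i)))).
  by apply/funext => n; congr Exp; apply/funext => w; congr h; apply/rowP => i; rewrite !mxE.
by move=> lim_h; exact: (cvg_unique _ lim_h (lawI _ t_inj t_neq0 _ (bcont_row_perm r bh))).
Qed.

Lemma Exp_sum_row_perm (R : realType) (d0 d2 : measure_display)
    (T0 : measurableType d0) (T2 : measurableType d2) (P0 : probability T0 R)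
    (B : nat -> R -> T0 -> R) (P2 : probability T2 R) m (I : T2 -> 'rV[R]_m)
    (h : 'rV[R]_m -> R) :
  rvec I -> has_law_mu P0 B P2 I -> bcont h ->
  Exp P2 (fun w => \sum_(r : {perm 'I_m}) h (\row_i I w ord0 (r i)))
  = m`!%:R * Exp P2 (fun w => h (I w)).
Proof.
move=> mI lawI bh; rewrite Exp_sum => [|r]; last first.
  exact: (bounded_measurable_continuous_comp mI (bcont_row_perm r bh)).
under eq_bigr do rewrite -(Exp_row_perm _ lawI bh).
by rewrite sumr_const card_Sn mulr_natl.
Qed.

Theorem proposition4 (R : realType) (k : nat) (k_ge1 : (0 < k)%N)
  (d0 d1 d2 : measure_display)
  (T0 : measurableType d0) (P0 : probability T0 R) (B : nat -> R -> T0 -> R)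
  (T1 : measurableType d1) (P1 : probability T1 R)
  (G : T1 -> 'rV[R]_k) (U : T1 -> 'I_k.+1) (tau : T1 -> {perm 'I_k.+1})
  (T2 : measurableType d2) (P2 : probability T2 R)
  (I : T2 -> 'rV[R]_k.+1) (U' : T2 -> 'I_k.+1) :
  iid_two_sided_BM P0 B ->
  rvec I -> has_law_mu P0 B P2 I ->
  rfin U' -> (forall u, P2 [set w | U' w = u] = ((k.+1)%:R^-1)%:E) ->
  (forall (f : 'rV[R]_k.+1 -> R) (g : 'I_k.+1 -> R), bcont f ->
     Exp P2 (fun w => f (I w) * g (U' w))
     = Exp P2 (fun w => f (I w)) * Exp P2 (fun w => g (U' w))) ->
  rvec G ->
  (forall f : 'rV[R]_k -> R, bcont f ->
     Exp P1 (fun w => f (G w)) = Exp P2 (fun w => f (gaps (I w)))) ->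
  rfin U -> (forall u, P1 [set w | U w = u] = ((k.+1)%:R^-1)%:E) ->
  rfin tau -> (forall s, P1 [set w | tau w = s] = (((k.+1)`!)%:R^-1)%:E) ->
  (forall (f : 'rV[R]_k -> R) (g : 'I_k.+1 -> R) (h : {perm 'I_k.+1} -> R),
     bcont f ->
     Exp P1 (fun w => f (G w) * g (U w) * h (tau w))
     = Exp P1 (fun w => f (G w)) * Exp P1 (fun w => g (U w))
       * Exp P1 (fun w => h (tau w))) ->
  forall f : 'rV[R]_k.+1 -> R, bcont f ->
    Exp P1 (fun w => f (\row_i (Gbar (G w) (tau w i) - Gbar (G w) (U w))))
    = Exp P2 (fun w => f (\row_i (I w ord0 i - I w ord0 (U' w)))).
Proof.
move=> _ mI lawI mU' lawU' indepIU' mG lawG mU lawU mtau lawtau indepGUtau f bf.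
pose A u (s : {perm 'I_k.+1}) (g : 'rV[R]_k) := f (\row_i (Gbar g (s i) - Gbar g u)).
pose C v (y : 'rV[R]_k.+1) := f (\row_i (y ord0 i - y ord0 v)).
have bA u s : bcont (A u s).
  by apply: bcont_row_sub => // [i|]; exact: continuous_Gbar.
have bC v : bcont (C v) by apply: bcont_row_sub => // [i|]; exact: coord_continuous.
rewrite (Exp_indep_uniform2 mG mU mtau bA indepGUtau lawU lawtau).
rewrite (Exp_indep_uniform mI mU' bC indepIU' lawU').
rewrite (lawG (fun g => \sum_u \sum_s A u s g)); last by apply: bcont_sum => u; exact: bcont_sum.
have -> : (fun w => \sum_u \sum_s A u s (gaps (I w)))
    = (fun w => \sum_(r : {perm 'I_k.+1}) \sum_v C v (\row_i I w ord0 (r i))).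
  apply/funext => w; rewrite sum_gaps_shifts; apply: eq_bigr => r _.
  by apply: eq_bigr => v _; congr f; apply/rowP => i; rewrite !mxE.
rewrite (Exp_sum_row_perm mI lawI (bcont_sum _ bC)).
have fact_neq0 : (k.+1)`!%:R != 0 :> R by rewrite pnatr_eq0 -lt0n fact_gt0.
by field; rewrite fact_neq0 andbT -mulrS pnatr_eq0.
Qed.
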